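(* Let $M_1, M_2, N_1, N_2$ be nontrivial permutation groups. Suppose $M_1$ has property (FA), and no nontrivial quotient of $M_1$ is isomorphic to any subgroup of $M_2$ or $N_2$. Then $M_1 \boxtimes N_1$ and $M_2 \boxtimes N_2$ are not (abstractly) isomorphic.
   Context: Box product: let $\Omega$ and $\Delta$ be disjoint sets, each of cardinality at least two, and let $M \leq \mathrm{Sym}(\Omega)$ and $N \leq \mathrm{Sym}(\Delta)$ be nontrivial permutation groups. Let $T$ be the $(|\Omega|,|\Delta|)$-biregular tree, with $V_\Omega$ the part of its bipartition consisting of vertices of valency $|\Omega|$ and $V_\Delta$ the part consisting of vertices of valency $|\Delta|$. For a vertex $v$, $A(v)$ denotes the set of arcs with origin $v$ and $\overline{A}(v)$ the set of arcs with terminus $v$. A legal colouring is a map $c : AT \to \Omega \cup \Delta$ such that $c|_{A(v)} : A(v) \to \Omega$ is a bijection for every $v \in V_\Omega$, $c|_{A(v)} : A(v) \to \Delta$ is a bijection for every $v \in V_\Delta$, and $c|_{\overline{A}(v)}$ has image of cardinality one for every vertex $v$. Define $U(M,N) = \{ g \in (\mathrm{Aut}\, T)_{\{V_\Omega\}} : c|_{A(gv)}\, g|_{A(v)}\, c|_{A(v)}^{-1} \in M \text{ for all } v \in V_\Omega,\ \in N \text{ for all } v \in V_\Delta\}$. The box product $M \boxtimes N$ is the subgroup of $\mathrm{Sym}(V_\Delta)$ induced by $U(M,N)$; up to permutation isomorphism it does not depend on the choice of legal colouring $c$. A group $G$ has Serre's property (FA) if, whenever $G$ acts on a tree without inversion,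 some vertex of the tree is fixed by all elements of $G$. *)

From Stdlib Require Import List.
Import ListNotations.
Set Implicit Arguments.

Definition comp {X : Type} (g h : X -> X) : X -> X := fun x => g (h x).

Definition bij {X : Type} (f : X -> X) : Prop :=
  (forall x y, f x = f y -> x = y) /\ (forall y, exists x, f x = y).

Definition perm_group {X : Type} (G : (X -> X) -> Prop) : Prop :=
  (forall g, G g -> bij g) /\
  G (fun x => x) /\
  (forall g h, G g -> G h -> G (comp g h)) /\
  (forall g, G g -> exists h, G h /\ comp g h = (fun x => x) /\ comp h g = (fun x => x)).

Definition nontrivial {X : Type} (G : (X -> X) -> Prop) : Prop :=
  exists g, G g /\ g <> (fun x => x).

Definition at_least_two (X : Type) : Prop := exists a b : X, a <> b.

Definition subgroup {X : Type} (H G : (X -> X) -> Prop) : Prop :=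
  (forall g, H g -> G g) /\ perm_group H.

Definition normal_subgroup {X : Type} (K G : (X -> X) -> Prop) : Prop :=
  subgroup K G /\
  (forall g k, G g -> K k -> exists k', K k' /\ comp g k = comp k' g).

Definition group_iso {X Y : Type} (G : (X -> X) -> Prop) (H : (Y -> Y) -> Prop) : Prop :=
  exists phi : (X -> X) -> (Y -> Y),
    (forall g, G g -> H (phi g)) /\
    (forall g h, G g -> G h -> phi (comp g h) = comp (phi g) (phi h)) /\
    (forall g h, G g -> G h -> phi g = phi h -> g = h) /\
    (forall h, H h -> exists g, G g /\ phi g = h).

(* psi : G -> S is constant exactly on the left cosets gK, multiplicative and
   onto S; i.e. psi induces an isomorphism G/K ~= S. *)
Definition quotient_iso_to {X Y : Type} (G K : (X -> X) -> Prop) (S : (Y -> Y) -> Prop) : Prop :=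
  exists psi : (X -> X) -> (Y -> Y),
    (forall g, G g -> S (psi g)) /\
    (forall h, S h -> exists g, G g /\ psi g = h) /\
    (forall g h, G g -> G h -> psi (comp g h) = comp (psi g) (psi h)) /\
    (forall g h, G g -> G h -> (psi g = psi h <-> exists k, K k /\ h = comp g k)).

Definition nontrivial_quotient_embeds {X Y : Type}
  (G : (X -> X) -> Prop) (H : (Y -> Y) -> Prop) : Prop :=
  exists K S, normal_subgroup K G /\ (exists g, G g /\ ~ K g) /\
              subgroup S H /\ quotient_iso_to G K S.

Fixpoint walk {V : Type} (adj : V -> V -> Prop) (u : V) (p : list V) (v : V) : Prop :=
  match p with
  | [] => u = v
  | w :: p' => adj u w /\ walk adj w p' v
  end.

Fixpoint no_backtrack {V : Type} (s : list V) : Prop :=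
  match s with
  | a :: ((b :: c :: _) as t) => a <> c /\ no_backtrack t
  | _ => True
  end.

Definition is_tree {V : Type} (adj : V -> V -> Prop) : Prop :=
  inhabited V /\
  (forall u v, adj u v -> adj v u) /\
  (forall v, ~ adj v v) /\
  (forall u v, exists p, walk adj u p v) /\
  (forall v p, walk adj v p v -> no_backtrack (v :: p) -> p = []).

Definition tree_aut {V : Type} (adj : V -> V -> Prop) (g : V -> V) : Prop :=
  bij g /\ (forall u v, adj u v <-> adj (g u) (g v)).

Definition has_FA {X : Type} (M : (X -> X) -> Prop) : Prop :=
  forall (V : Type) (adj : V -> V -> Prop) (rho : (X -> X) -> V -> V),
    is_tree adj ->
    (forall g, M g -> tree_aut adj (rho g)) ->
    (forall g h, M g -> M h -> rho (comp g h) = comp (rho g) (rho h)) ->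
    (forall g u v, M g -> adj u v -> ~ (rho g u = v /\ rho g v = u)) ->
    exists v, forall g, M g -> rho g v = v.

(* (V, adj) is a tree with bipartition V_Om = inO, V_De = complement, and
   col is a legal colouring of its arcs (arcs = ordered pairs (u,w) with
   adj u w; colours in the disjoint union Om + De).  Existence of the legal
   colouring forces the tree to be the (|Om|,|De|)-biregular tree. *)
Definition legal_box_setup (Om De V : Type) (adj : V -> V -> Prop)
  (inO : V -> Prop) (col : V -> V -> Om + De) : Prop :=
  is_tree adj /\
  (forall u v, adj u v -> (inO u <-> ~ inO v)) /\
  (forall v, inO v ->
     (forall w, adj v w -> exists o, col v w = inl o) /\
     (forall o, exists w, adj v w /\ col v w = inl o) /\
     (forall w w', adj v w -> adj v w' -> col v w = col v w' -> w = w')) /\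
  (forall v, ~ inO v ->
     (forall w, adj v w -> exists d, col v w = inr d) /\
     (forall d, exists w, adj v w /\ col v w = inr d) /\
     (forall w w', adj v w -> adj v w' -> col v w = col v w' -> w = w')) /\
  (forall v u u', adj u v -> adj u' v -> col u v = col u' v).

Definition in_U (Om De V : Type) (adj : V -> V -> Prop) (inO : V -> Prop)
  (col : V -> V -> Om + De) (M : (Om -> Om) -> Prop) (N : (De -> De) -> Prop)
  (g : V -> V) : Prop :=
  tree_aut adj g /\
  (forall v, inO (g v) <-> inO v) /\
  (forall v, inO v -> exists s, M s /\
     forall w o, adj v w -> col v w = inl o -> col (g v) (g w) = inl (s o)) /\
  (forall v, ~ inO v -> exists s, N s /\
     forall w d, adj v w -> col v w = inr d -> col (g v) (g w) = inr (s d)).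

Definition box_product (Om De V : Type) (adj : V -> V -> Prop) (inO : V -> Prop)
  (col : V -> V -> Om + De) (M : (Om -> Om) -> Prop) (N : (De -> De) -> Prop)
  : ({v : V | ~ inO v} -> {v : V | ~ inO v}) -> Prop :=
  fun f => exists g, in_U adj inO col M N g /\
                     forall x, proj1_sig (f x) = g (proj1_sig x).

From Stdlib Require Import List Classical ClassicalEpsilon FunctionalExtensionality ProofIrrelevance Lia.
Import ListNotations.

(* Fix a vertex v0 in V_Omega of the first tree.  For s in M1, transporting
   walks from v0 along colours relabelled by s at V_Omega-vertices (and kept at
   V_Delta-vertices) defines an element of U(M1,N1) fixing v0; closed walks go
   to closed walks because a tree has no cycles.  This embeds M1 into
   M1 [box] N1, so an isomorphism would give an injective homomorphism
   M1 -> M2 [box] N2, i.e. an action of M1 on the second tree without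
   inversion.  By (FA) it fixes a vertex u.  The local action at u is a
   homomorphism from M1 into M2 or N2, hence trivial, so M1 fixes every
   neighbour of u and, by connectedness, every vertex: the homomorphism is
   trivial, contradicting M1 <> 1. *)

Lemma tree_aut_comp {V : Type} (adj : V -> V -> Prop) f h :
  tree_aut adj f -> tree_aut adj h -> tree_aut adj (comp f h).
Proof.
  intros [[fi fs] fa] [[hi hs] ha]. split; [split|].
  - intros x y E. apply hi, fi, E.
  - intro y. destruct (fs y) as [x Hx]. destruct (hs x) as [z Hz].
    exists z. unfold comp. congruence.
  - intros u v. unfold comp. rewrite (ha u v). apply fa.
Qed.

Section Homomorphism.
Context {X Y : Type} (M : (X -> X) -> Prop) (L : (Y -> Y) -> Prop) (psi : (X -> X) -> (Y -> Y)).
Hypothesis pM : perm_group M.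
Hypothesis pL : perm_group L.
Hypothesis psi_in : forall g, M g -> L (psi g).
Hypothesis psi_hom : forall g h, M g -> M h -> psi (comp g h) = comp (psi g) (psi h).

Lemma hom_id : psi (fun x => x) = (fun y => y).
Proof.
  destruct pM as [_ [Mid _]]. destruct pL as [Lbij _].
  pose proof (psi_hom _ _ Mid Mid) as E.
  destruct (Lbij _ (psi_in _ Mid)) as [inj _].
  extensionality y. apply inj. symmetry. exact (equal_f E y).
Qed.

Lemma hom_inv g h : M g -> M h -> comp g h = (fun x => x) ->
  comp (psi g) (psi h) = (fun y => y).
Proof. intros Hg Hh E. rewrite <- (psi_hom g h Hg Hh), E. exact hom_id. Qed.

Definition hom_kernel (k : X -> X) : Prop := M k /\ psi k = (fun y => y).
Definition hom_image (s : Y -> Y) : Prop := exists g, M g /\ psi g = s.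

Lemma hom_kernel_normal : normal_subgroup hom_kernel M.
Proof.
  destruct pM as [Mbij [Mid [Mc Minv]]].
  split; [split|].
  - intros k [Hk _]; exact Hk.
  - split; [|split; [|split]].
    + intros k [Hk _]; auto.
    + split; [exact Mid | exact hom_id].
    + intros a b [Ha Ea] [Hb Eb]. split; auto. rewrite psi_hom, Ea, Eb by auto. reflexivity.
    + intros a [Ha Ea]. destruct (Minv a Ha) as [b [Hb [E1 E2]]].
      exists b. split; [split; auto | auto].
      pose proof (hom_inv a b Ha Hb E1) as K. rewrite Ea in K. exact K.
  - intros a k Ha [Hk Ek]. destruct (Minv a Ha) as [b [Hb [E1 E2]]].
    exists (comp a (comp k b)). split.
    + split; [auto|]. rewrite psi_hom, psi_hom, Ek by auto. exact (hom_inv a b Ha Hb E1).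
    + extensionality x. pose proof (equal_f E2 x) as K. unfold comp in *. rewrite K. reflexivity.
Qed.

Lemma hom_image_subgroup : subgroup hom_image L.
Proof.
  destruct pM as [_ [Mid [Mc Minv]]]. destruct pL as [Lbij _].
  split; [intros s [a [Ha <-]]; auto|].
  split; [|split; [|split]].
  - intros s [a [Ha <-]]; auto.
  - exists (fun x => x); split; [exact Mid | exact hom_id].
  - intros s t [a [Ha <-]] [b [Hb <-]]. exists (comp a b); auto.
  - intros s [a [Ha <-]]. destruct (Minv a Ha) as [b [Hb [E1 E2]]].
    exists (psi b). split; [exists b; auto|]. split; apply hom_inv; auto.
Qed.

Lemma hom_quotient_iso : quotient_iso_to M hom_kernel hom_image.
Proof.
  destruct pM as [_ [_ [Mc Minv]]].
  exists psi. split; [|split; [|split]].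
  - intros a Ha; exists a; auto.
  - intros s [a [Ha Ea]]; exists a; auto.
  - exact psi_hom.
  - intros a b Ha Hb. split.
    + intro E. destruct (Minv a Ha) as [a' [Ha' [E1 E2]]]. exists (comp a' b). split.
      * split; [auto|]. rewrite psi_hom, <- E by auto. apply hom_inv; auto.
      * extensionality x. pose proof (equal_f E1 (b x)) as K. unfold comp in *. rewrite K. reflexivity.
    + intros [k [[Hk Ek] ->]]. rewrite psi_hom, Ek by auto. reflexivity.
Qed.

Lemma hom_trivial_of_no_quotient_embedding :
  ~ nontrivial_quotient_embeds M L -> forall g, M g -> psi g = (fun y => y).
Proof.
  intros nq g Hg. apply NNPP. intro Hne. apply nq.
  exists hom_kernel, hom_image.
  split; [exact hom_kernel_normal|].
  split; [exists g; split; [exact Hg | intros [_ E]; contradiction]|].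
  split; [exact hom_image_subgroup | exact hom_quotient_iso].
Qed.

End Homomorphism.

Section LegalColouring.
Context {Om De V : Type} {adj : V -> V -> Prop} {inO : V -> Prop} {col : V -> V -> Om + De}.
Hypothesis T : legal_box_setup adj inO col.

Lemma setup_tree : is_tree adj.
Proof. exact (proj1 T). Qed.
Lemma adj_sym {u v} : adj u v -> adj v u.
Proof. apply (proj1 (proj2 setup_tree)). Qed.
Lemma adj_bipartite {u v} : adj u v -> (inO u <-> ~ inO v).
Proof. apply (proj1 (proj2 T)). Qed.
Lemma out_col_Om {v w} : inO v -> adj v w -> exists o, col v w = inl o.
Proof. intro Hv. apply (proj1 (proj1 (proj2 (proj2 T)) v Hv)). Qed.
Lemma out_col_Om_surj {v} o : inO v -> exists w, adj v w /\ col v w = inl o.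
Proof. intro Hv. apply (proj1 (proj2 (proj1 (proj2 (proj2 T)) v Hv))). Qed.
Lemma out_col_De {v w} : ~ inO v -> adj v w -> exists d, col v w = inr d.
Proof. intro Hv. apply (proj1 (proj1 (proj2 (proj2 (proj2 T))) v Hv)). Qed.
Lemma out_col_De_surj {v} d : ~ inO v -> exists w, adj v w /\ col v w = inr d.
Proof. intro Hv. apply (proj1 (proj2 (proj1 (proj2 (proj2 (proj2 T))) v Hv))). Qed.
Lemma out_col_inj {v w w'} : adj v w -> adj v w' -> col v w = col v w' -> w = w'.
Proof.
  destruct T as [_ [_ [HO [HD _]]]].
  destruct (classic (inO v)) as [Hv|Hv];
    [apply (proj2 (proj2 (HO v Hv))) | apply (proj2 (proj2 (HD v Hv)))].
Qed.
Lemma in_col_const {v u u'} : adj u v -> adj u' v -> col u v = col u' v.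
Proof. apply (proj2 (proj2 (proj2 (proj2 T)))). Qed.

Lemma exists_Om_vertex : at_least_two De -> exists v, inO v.
Proof.
  intros [d _]. destruct (proj1 setup_tree) as [x].
  destruct (classic (inO x)) as [Hx|Hx]; [eauto|].
  destruct (out_col_De_surj d Hx) as [w [Hw _]]. exists w.
  pose proof (adj_bipartite Hw). tauto.
Qed.

Lemma in_U_no_inversion M N g u v :
  in_U adj inO col M N g -> adj u v -> ~ (g u = v /\ g v = u).
Proof.
  intros [_ [Hside _]] Huv [E _]. pose proof (Hside u) as K. rewrite E in K.
  pose proof (adj_bipartite Huv). tauto.
Qed.

(* A vertex of V_Omega has two neighbours of distinct colours; an automorphism
   moving it while fixing both would create a 4-cycle. *)
Lemma tree_aut_eq_of_agree_on_De f h : at_least_two Om ->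
  tree_aut adj f -> tree_aut adj h -> (forall v, ~ inO v -> f v = h v) ->
  forall v, f v = h v.
Proof.
  intros [o1 [o2 Hne]] [_ fa] [[hi _] ha] Hag v.
  destruct (classic (inO v)) as [Hv|Hv]; [|auto].
  destruct (out_col_Om_surj o1 Hv) as [a [Ha Ca]].
  destruct (out_col_Om_surj o2 Hv) as [b [Hb Cb]].
  assert (Hab : a <> b) by (intros ->; congruence).
  assert (Hna : ~ inO a) by (pose proof (adj_bipartite Ha); tauto).
  assert (Hnb : ~ inO b) by (pose proof (adj_bipartite Hb); tauto).
  apply NNPP; intro Hne'.
  destruct setup_tree as [_ [_ [_ [_ acyclic]]]].
  assert (Hw : walk adj (f v) [h a; h v; h b; f v] (f v)).
  { simpl. repeat split.
    - rewrite <- (Hag a Hna). exact (proj1 (fa v a) Ha).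
    - apply adj_sym. exact (proj1 (ha v a) Ha).
    - exact (proj1 (ha v b) Hb).
    - rewrite <- (Hag b Hnb). apply adj_sym. exact (proj1 (fa v b) Hb). }
  assert (Hnb' : no_backtrack [f v; h a; h v; h b; f v]).
  { simpl. repeat split; auto. }
  discriminate (acyclic _ _ Hw Hnb').
Qed.

Definition relabel (s : Om -> Om) (c : Om + De) : Om + De :=
  match c with inl o => inl (s o) | inr d => inr d end.

Lemma relabel_id c : relabel (fun o => o) c = c.
Proof. destruct c; reflexivity. Qed.
Lemma relabel_comp s t c : relabel s (relabel t c) = relabel (comp s t) c.
Proof. destruct c; reflexivity. Qed.

(* The neighbour of y along the arc of colour c (a junk vertex if there is none). *)
Definition neighbour (y : V) (c : Om + De) : V :=
  epsilon (inhabits y) (fun w => adj y w /\ col y w = c).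

Lemma neighbour_spec y c : (exists w, adj y w /\ col y w = c) ->
  adj y (neighbour y c) /\ col y (neighbour y c) = c.
Proof. apply (epsilon_spec (inhabits y) (fun w => adj y w /\ col y w = c)). Qed.

Lemma neighbour_eq y w c : adj y w -> col y w = c -> neighbour y c = w.
Proof.
  intros H1 H2. destruct (neighbour_spec y c (ex_intro _ w (conj H1 H2))) as [A B].
  apply (out_col_inj A H1). congruence.
Qed.

Definition matched (s : Om -> Om) (x y : V) : Prop :=
  (inO x <-> inO y) /\ (forall a b, adj a x -> adj b y -> col b y = relabel s (col a x)).

Lemma matched_step s x y w : matched s x y -> adj x w ->
  let w' := neighbour y (relabel s (col x w)) in
  adj y w' /\ col y w' = relabel s (col x w) /\ matched s w w'.
Proof.
  intros [Hside Hcol] Hxw w'.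
  assert (Hex : exists w', adj y w' /\ col y w' = relabel s (col x w)).
  { destruct (classic (inO x)) as [Hx|Hx].
    - destruct (out_col_Om Hx Hxw) as [o ->]. apply out_col_Om_surj. tauto.
    - destruct (out_col_De Hx Hxw) as [d ->]. apply out_col_De_surj. tauto. }
  destruct (neighbour_spec _ _ Hex) as [A B].
  split; [exact A|]. split; [exact B|]. split.
  - pose proof (adj_bipartite Hxw). pose proof (adj_bipartite A).
    destruct (classic (inO w)); destruct (classic (inO w')); tauto.
  - intros a b Ha Hb. rewrite (in_col_const Ha Hxw), (in_col_const Hb A). exact B.
Qed.

Lemma matched_step_back s x y w : matched s x y -> adj x w ->
  neighbour (neighbour y (relabel s (col x w))) (relabel s (col w x)) = y.
Proof.
  intros HR Hxw. destruct (matched_step s x y w HR Hxw) as [A _].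
  apply neighbour_eq; [exact (adj_sym A)|].
  apply (proj2 HR); [exact (adj_sym Hxw) | exact (adj_sym A)].
Qed.

Fixpoint path (x : V) (p : list V) : Prop :=
  match p with [] => True | w :: p' => adj x w /\ path w p' end.
Fixpoint path_end (x : V) (p : list V) : V :=
  match p with [] => x | w :: p' => path_end w p' end.
Fixpoint path_rev (x : V) (p : list V) : list V :=
  match p with [] => [] | w :: p' => path_rev w p' ++ [x] end.

Lemma walk_iff_path p x z : walk adj x p z <-> path x p /\ path_end x p = z.
Proof. revert x; induction p; simpl; intros; [tauto|]. rewrite IHp. tauto. Qed.
Lemma path_app p x q : path x (p ++ q) <-> path x p /\ path (path_end x p) q.
Proof. revert x; induction p; simpl; intros; [tauto|]. rewrite IHp. tauto. Qed.
Lemma path_end_app p x q : path_end x (p ++ q) = path_end (path_end x p) q.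
Proof. revert x; induction p; simpl; auto. Qed.
Lemma path_end_rev p x : path_end (path_end x p) (path_rev x p) = x.
Proof. revert x; induction p; simpl; intros x; auto. rewrite path_end_app, IHp. reflexivity. Qed.
Lemma path_rev_path p x : path x p -> path (path_end x p) (path_rev x p).
Proof.
  revert x; induction p; simpl; intros x Hp; auto. destruct Hp as [Ha Hp].
  apply path_app. rewrite path_end_rev. simpl. split; auto. split; auto. apply adj_sym; auto.
Qed.

Fixpoint transport s (x y : V) (p : list V) : list V :=
  match p with
  | [] => []
  | w :: p' => neighbour y (relabel s (col x w)) :: transport s w (neighbour y (relabel s (col x w))) p'
  end.
Fixpoint transport_end s (x y : V) (p : list V) : V :=
  match p with
  | [] => y
  | w :: p' => transport_end s w (neighbour y (relabel s (col x w))) p'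
  end.

Lemma transport_end_app p s x y q :
  transport_end s x y (p ++ q) = transport_end s (path_end x p) (transport_end s x y p) q.
Proof. revert x y; induction p; simpl; auto. Qed.

Lemma transport_end_matched p s x y : matched s x y -> path x p ->
  matched s (path_end x p) (transport_end s x y p).
Proof.
  revert x y; induction p as [|w p IH]; simpl; intros x y HR Hp; auto.
  destruct Hp as [Hw Hp]. apply IH; auto. apply (matched_step s x y w HR Hw).
Qed.

Lemma transport_end_rev p s x y : matched s x y -> path x p ->
  transport_end s (path_end x p) (transport_end s x y p) (path_rev x p) = y.
Proof.
  revert x y; induction p as [|w p IH]; simpl; intros x y HR Hp; auto.
  destruct Hp as [Hw Hp]. rewrite transport_end_app, IH, path_end_rev; auto.
  - apply matched_step_back; auto.
  - apply (matched_step s x y w HR Hw).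
Qed.

Lemma transport_end_inj p s x y y' : matched s x y -> matched s x y' -> path x p ->
  transport_end s x y p = transport_end s x y' p -> y = y'.
Proof.
  intros H H' Hp E. rewrite <- (transport_end_rev p s x y), <- (transport_end_rev p s x y'); auto.
  congruence.
Qed.

Lemma transport_end_backtrack_head s x y b r : matched s x y -> path x (b :: x :: r) ->
  transport_end s x y (b :: x :: r) = transport_end s x y r.
Proof. intros HR [Hb _]. simpl. rewrite (matched_step_back s x y b HR Hb). reflexivity. Qed.

Lemma transport_end_backtrack q s x y a b r : matched s x y -> path x (q ++ a :: b :: a :: r) ->
  transport_end s x y (q ++ a :: b :: a :: r) = transport_end s x y (q ++ a :: r).
Proof.
  revert x y; induction q as [|c q IH]; simpl; intros x y HR Hp.
  - destruct Hp as [Hxa [Hab _]]. rewrite (matched_step_back s a _ b); auto.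
    apply (matched_step s x y a HR Hxa).
  - destruct Hp as [Hxc Hp]. apply IH; auto. apply (matched_step s x y c HR Hxc).
Qed.

Lemma path_backtrack q x a b r : path x (q ++ a :: b :: a :: r) -> path x (q ++ a :: r).
Proof. revert x; induction q; simpl; intros; [tauto|]. destruct H; split; eauto. Qed.
Lemma path_end_backtrack q x a b r : path_end x (q ++ a :: b :: a :: r) = path_end x (q ++ a :: r).
Proof. revert x; induction q; simpl; auto. Qed.

Lemma backtrack_split (p : list V) (x : V) : ~ no_backtrack (x :: p) ->
  (exists b r, p = b :: x :: r) \/ (exists q a b r, p = q ++ a :: b :: a :: r).
Proof.
  revert x; induction p as [|w p IH]; intros x H; [contradiction (H I)|].
  destruct p as [|c p']; [contradiction (H I)|].
  simpl in H. destruct (classic (x = c)) as [<-|E]; [left; eauto|right].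
  destruct (IH w) as [[b [r ->]]|[q [a [b [r ->]]]]].
  - intro Hn. apply H. split; auto.
  - exists [], w, b, r. reflexivity.
  - exists (w :: q), a, b, r. reflexivity.
Qed.

(* Cancelling backtracks reduces a closed walk to the empty one, since the
   tree has no cycles. *)
Lemma transport_end_closed n p s x y : length p <= n -> matched s x y -> path x p ->
  path_end x p = x -> transport_end s x y p = y.
Proof.
  revert p; induction n; intros p Hl HR Hp Hend.
  - destruct p; [reflexivity | simpl in Hl; lia].
  - destruct (classic (no_backtrack (x :: p))) as [Hn|Hn].
    + destruct setup_tree as [_ [_ [_ [_ acyclic]]]].
      rewrite (acyclic x p); [reflexivity | apply walk_iff_path | ]; auto.
    + destruct (backtrack_split p x Hn) as [[b [r ->]]|[q [a [b [r ->]]]]].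
      * rewrite transport_end_backtrack_head by auto. simpl in *.
        apply IHn; [lia | | tauto | ]; auto.
      * rewrite transport_end_backtrack by auto. apply IHn; auto.
        -- rewrite length_app in *; simpl in *; lia.
        -- apply (path_backtrack _ _ _ b); auto.
        -- rewrite <- (path_end_backtrack _ _ _ b); auto.
Qed.

Lemma transport_end_id p x : path x p -> transport_end (fun o => o) x x p = path_end x p.
Proof.
  revert x; induction p; simpl; intros x Hp; auto. destruct Hp as [Ha Hp].
  rewrite relabel_id, (neighbour_eq x a _ Ha eq_refl). apply IHp; auto.
Qed.

Lemma transport_path p s x y : matched s x y -> path x p -> path y (transport s x y p).
Proof.
  revert x y; induction p; simpl; intros x y HR Hp; auto. destruct Hp as [Ha Hp].
  destruct (matched_step s x y a HR Ha) as [A [_ C]]. split; auto.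
Qed.
Lemma path_end_transport p s x y : path_end y (transport s x y p) = transport_end s x y p.
Proof. revert x y; induction p; simpl; auto. Qed.
Lemma transport_end_transport p s t x y z : matched t x y -> path x p ->
  transport_end s y z (transport t x y p) = transport_end (comp s t) x z p.
Proof.
  revert x y z; induction p; simpl; intros x y z HR Hp; auto. destruct Hp as [Ha Hp].
  destruct (matched_step t x y a HR Ha) as [_ [B C]]. rewrite B, relabel_comp. apply IHp; auto.
Qed.

Section Rooted.
Variable v0 : V.
Hypothesis Hv0 : inO v0.

Lemma matched_root s : matched s v0 v0.
Proof.
  split; [tauto|]. intros a b Ha Hb. rewrite (in_col_const Hb Ha).
  assert (Hna : ~ inO a) by (pose proof (adj_bipartite Ha); tauto).
  destruct (out_col_De Hna Ha) as [d ->]. reflexivity.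
Qed.

Definition transported s x y :=
  exists p, path v0 p /\ path_end v0 p = x /\ transport_end s v0 v0 p = y.

Lemma transported_fun s x y1 y2 : transported s x y1 -> transported s x y2 -> y1 = y2.
Proof.
  intros [p1 [P1 [L1 E1]]] [p2 [P2 [L2 E2]]].
  assert (Hclosed : transport_end s v0 v0 (p1 ++ path_rev v0 p2) = v0).
  { apply (transport_end_closed (length (p1 ++ path_rev v0 p2))); auto using matched_root.
    - apply path_app. rewrite L1, <- L2. split; auto. apply path_rev_path; auto.
    - rewrite path_end_app, L1, <- L2, path_end_rev. reflexivity. }
  rewrite transport_end_app, L1, E1 in Hclosed.
  apply (transport_end_inj (path_rev v0 p2) s x).
  - rewrite <- L1, <- E1. apply transport_end_matched; auto using matched_root.
  - rewrite <- L2, <- E2. apply transport_end_matched; auto using matched_root.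
  - rewrite <- L2. apply path_rev_path; auto.
  - rewrite Hclosed, <- L2, <- E2. symmetry. apply transport_end_rev; auto using matched_root.
Qed.

Lemma path_from_root x : exists p, path v0 p /\ path_end v0 p = x.
Proof.
  destruct setup_tree as [_ [_ [_ [connected _]]]].
  destruct (connected v0 x) as [p Hp]. exists p. apply walk_iff_path; auto.
Qed.

(* The automorphism fixing v0 that relabels colours by s at V_Omega-vertices. *)
Definition relabel_aut s x := epsilon (inhabits x) (transported s x).

Lemma relabel_aut_spec s x : transported s x (relabel_aut s x).
Proof.
  destruct (path_from_root x) as [p [P L]]. unfold relabel_aut. apply epsilon_spec.
  exists (transport_end s v0 v0 p), p. auto.
Qed.
Lemma relabel_aut_eq s x y : transported s x y -> relabel_aut s x = y.
Proof. apply transported_fun, relabel_aut_spec. Qed.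
Lemma relabel_aut_matched s x : matched s x (relabel_aut s x).
Proof.
  destruct (relabel_aut_spec s x) as [p [P [<- <-]]].
  apply transport_end_matched; auto using matched_root.
Qed.
Lemma relabel_aut_adj s x z : adj x z ->
  relabel_aut s z = neighbour (relabel_aut s x) (relabel s (col x z)).
Proof.
  intro H. destruct (relabel_aut_spec s x) as [p [P [L E]]].
  apply relabel_aut_eq. exists (p ++ [z]). split; [|split].
  - apply path_app. rewrite L. simpl. auto.
  - rewrite path_end_app, L. reflexivity.
  - rewrite transport_end_app, L, E. reflexivity.
Qed.
Lemma relabel_aut_root s : relabel_aut s v0 = v0.
Proof. apply relabel_aut_eq. exists []. simpl. auto. Qed.
Lemma relabel_aut_id x : relabel_aut (fun o => o) x = x.
Proof.
  destruct (path_from_root x) as [p [P L]]. apply relabel_aut_eq.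
  exists p. rewrite transport_end_id; auto.
Qed.
Lemma relabel_aut_comp s t x : relabel_aut s (relabel_aut t x) = relabel_aut (comp s t) x.
Proof.
  destruct (relabel_aut_spec t x) as [p [P [L E]]].
  rewrite (relabel_aut_eq (comp s t) x (transport_end (comp s t) v0 v0 p)) by (exists p; auto).
  apply relabel_aut_eq. exists (transport t v0 v0 p). split; [|split].
  - apply transport_path; auto using matched_root.
  - rewrite path_end_transport. auto.
  - apply transport_end_transport; auto using matched_root.
Qed.
Lemma relabel_aut_col s x w : adj x w ->
  adj (relabel_aut s x) (relabel_aut s w) /\
  col (relabel_aut s x) (relabel_aut s w) = relabel s (col x w).
Proof.
  intro H. rewrite (relabel_aut_adj s x w H).
  destruct (matched_step s x _ w (relabel_aut_matched s x) H) as [A [B _]]. auto.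
Qed.

Lemma relabel_aut_in_U (M : (Om -> Om) -> Prop) (N : (De -> De) -> Prop) s :
  perm_group M -> perm_group N -> M s -> in_U adj inO col M N (relabel_aut s).
Proof.
  intros [_ [_ [_ Minv]]] [_ [Nid _]] Hs.
  destruct (Minv s Hs) as [s' [_ [E1 E2]]].
  assert (K1 : forall x, relabel_aut s' (relabel_aut s x) = x)
    by (intro; rewrite relabel_aut_comp, E2; apply relabel_aut_id).
  assert (K2 : forall x, relabel_aut s (relabel_aut s' x) = x)
    by (intro; rewrite relabel_aut_comp, E1; apply relabel_aut_id).
  split; [|split; [|split]].
  - split; [split|].
    + intros x y Hxy. rewrite <- (K1 x), <- (K1 y), Hxy. reflexivity.
    + intro y. exists (relabel_aut s' y). apply K2.
    + intros u v. split; [intro H; apply (relabel_aut_col s u v H)|].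
      intro H. rewrite <- (K1 u), <- (K1 v). apply (relabel_aut_col s' _ _ H).
  - intro v. pose proof (proj1 (relabel_aut_matched s v)). tauto.
  - intros v _. exists s. split; auto. intros w o Ha Hc.
    rewrite (proj2 (relabel_aut_col s v w Ha)), Hc. reflexivity.
  - intros v _. exists (fun d => d). split; auto. intros w d Ha Hc.
    rewrite (proj2 (relabel_aut_col s v w Ha)), Hc. reflexivity.
Qed.

Definition relabel_box s (x : {v : V | ~ inO v}) : {v : V | ~ inO v} :=
  exist (fun v => ~ inO v) (relabel_aut s (proj1_sig x))
    (fun H => proj2_sig x (proj2 (proj1 (relabel_aut_matched s (proj1_sig x))) H)).

Lemma relabel_box_in M N s : perm_group M -> perm_group N -> M s ->
  box_product adj inO col M N (relabel_box s).
Proof. intros. exists (relabel_aut s). split; [apply relabel_aut_in_U; auto | reflexivity]. Qed.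

Lemma relabel_box_comp s t : relabel_box (comp s t) = comp (relabel_box s) (relabel_box t).
Proof.
  extensionality x. apply subset_eq_compat. symmetry. apply relabel_aut_comp.
Qed.
Lemma relabel_box_id : relabel_box (fun o => o) = (fun x => x).
Proof. extensionality x. destruct x. apply subset_eq_compat. apply relabel_aut_id. Qed.

(* s is read off the colours at v0, whose neighbours all lie in V_Delta. *)
Lemma relabel_box_trivial s : relabel_box s = (fun x => x) -> s = (fun o => o).
Proof.
  intro E. extensionality o. destruct (out_col_Om_surj o Hv0) as [w [Hw Cw]].
  assert (Hwn : ~ inO w) by (pose proof (adj_bipartite Hw); tauto).
  assert (Ew : relabel_aut s w = w)
    by exact (f_equal (@proj1_sig _ _) (equal_f E (exist _ w Hwn))).
  pose proof (proj2 (relabel_aut_col s v0 w Hw)) as K.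
  rewrite relabel_aut_root, Ew, Cw in K. simpl in K. congruence.
Qed.

End Rooted.

Section Action.
Context {X : Type} (M : (X -> X) -> Prop) (rho : (X -> X) -> V -> V).
Hypothesis pM : perm_group M.
Hypothesis rho_aut : forall g, M g -> tree_aut adj (rho g).
Hypothesis rho_hom : forall g h, M g -> M h -> rho (comp g h) = comp (rho g) (rho h).

(* The colours of the arcs out of u are [iota c], c : C; the local action of
   M at u is then a homomorphism into L, which must be trivial. *)
Lemma fixed_vertex_fixes_neighbours {C : Type} (L : (C -> C) -> Prop) (iota : C -> Om + De) u :
  perm_group L -> ~ nontrivial_quotient_embeds M L ->
  (forall c c', iota c = iota c' -> c = c') ->
  (forall w, adj u w -> exists c, col u w = iota c) ->
  (forall c, exists w, adj u w /\ col u w = iota c) ->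
  (forall g, M g -> rho g u = u) ->
  (forall g, M g -> exists s, L s /\
     forall w c, adj u w -> col u w = iota c -> col (rho g u) (rho g w) = iota (s c)) ->
  forall g w, M g -> adj u w -> rho g w = w.
Proof.
  intros pL nq iota_inj Hout Hsurj Hfix Hloc.
  set (local := fun g (s : C -> C) => L s /\
         forall w c, adj u w -> col u w = iota c -> col u (rho g w) = iota (s c)).
  set (psi := fun g => epsilon (inhabits (fun c : C => c)) (local g)).
  assert (psi_spec : forall g, M g -> local g (psi g)).
  { intros g Hg. apply epsilon_spec. destruct (Hloc g Hg) as [s [Hs Hs']].
    exists s. split; auto. intros w c H1 H2. rewrite <- (Hfix g Hg) at 1. auto. }
  assert (Hmove : forall g, M g -> forall w c, adj u w -> col u w = iota c ->
            adj u (rho g w) /\ col u (rho g w) = iota (psi g c)).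
  { intros g Hg w c H1 H2. split; [|apply (proj2 (psi_spec g Hg)); auto].
    rewrite <- (Hfix g Hg) at 1. apply (proj1 (proj2 (rho_aut g Hg) u w) H1). }
  assert (psi_hom : forall g h, M g -> M h -> psi (comp g h) = comp (psi g) (psi h)).
  { intros g h Hg Hh. extensionality c. destruct (Hsurj c) as [w [Hw Cw]].
    assert (Mgh : M (comp g h)) by (apply pM; auto).
    destruct (Hmove _ Mgh w c Hw Cw) as [_ K1].
    destruct (Hmove h Hh w c Hw Cw) as [A2 K2].
    destruct (Hmove g Hg _ _ A2 K2) as [_ K3].
    rewrite (rho_hom g h Hg Hh) in K1. unfold comp in *. rewrite K1 in K3. auto. }
  intros g w Hg Hw. destruct (Hout w Hw) as [c Cw]. destruct (Hmove g Hg w c Hw Cw) as [A K].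
  rewrite (hom_trivial_of_no_quotient_embedding M L psi pM pL
             (fun g Hg => proj1 (psi_spec g Hg)) psi_hom nq g Hg) in K.
  apply (out_col_inj A Hw). rewrite K, Cw. reflexivity.
Qed.

Variables (MO : (Om -> Om) -> Prop) (ND : (De -> De) -> Prop).
Hypothesis pMO : perm_group MO.
Hypothesis pND : perm_group ND.
Hypothesis nqO : ~ nontrivial_quotient_embeds M MO.
Hypothesis nqD : ~ nontrivial_quotient_embeds M ND.
Hypothesis rho_in_U : forall g, M g -> in_U adj inO col MO ND (rho g).

Lemma in_U_action_fixes_neighbours u :
  (forall g, M g -> rho g u = u) -> forall g w, M g -> adj u w -> rho g w = w.
Proof.
  intro Hfix. destruct (classic (inO u)) as [Hu|Hu].
  - apply (fixed_vertex_fixes_neighbours MO (@inl Om De) u); auto.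
    + intros c c' E. injection E; auto.
    + intros w Hw. apply (out_col_Om Hu Hw).
    + intro c. apply (out_col_Om_surj c Hu).
    + intros g Hg. apply (rho_in_U g Hg); auto.
  - apply (fixed_vertex_fixes_neighbours ND (@inr Om De) u); auto.
    + intros c c' E. injection E; auto.
    + intros w Hw. apply (out_col_De Hu Hw).
    + intro c. apply (out_col_De_surj c Hu).
    + intros g Hg. apply (rho_in_U g Hg); auto.
Qed.

Lemma in_U_action_trivial : has_FA M -> forall g x, M g -> rho g x = x.
Proof.
  intro FA.
  destruct (FA V adj rho setup_tree rho_aut rho_hom) as [w Hw].
  { intros g u v Hg. apply (in_U_no_inversion MO ND), rho_in_U, Hg. }
  intros g x Hg. destruct (proj1 (proj2 (proj2 (proj2 setup_tree))) w x) as [p Hp].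
  revert w Hw Hp. induction p as [|a p IH]; intros u Hu Hp.
  - simpl in Hp. subst. auto.
  - destruct Hp as [Hua Hp]. apply (IH a); auto.
    intros h Hh. apply (in_U_action_fixes_neighbours u); auto.
Qed.

End Action.

Lemma box_hom_lift {X : Type} (M : (X -> X) -> Prop) MO ND psi :
  at_least_two Om -> perm_group M ->
  (forall g, M g -> box_product adj inO col MO ND (psi g)) ->
  (forall g h, M g -> M h -> psi (comp g h) = comp (psi g) (psi h)) ->
  exists rho : (X -> X) -> V -> V,
    (forall g, M g -> in_U adj inO col MO ND (rho g) /\
                      forall x, proj1_sig (psi g x) = rho g (proj1_sig x)) /\
    (forall g h, M g -> M h -> rho (comp g h) = comp (rho g) (rho h)).
Proof.
  intros hO pM psi_in psi_hom.
  set (lift := fun g h => in_U adj inO col MO ND h /\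
                 forall x, proj1_sig (psi g x) = h (proj1_sig x)).
  exists (fun g => epsilon (inhabits (fun v : V => v)) (lift g)).
  assert (lift_spec : forall g, M g -> lift g (epsilon (inhabits (fun v : V => v)) (lift g)))
    by (intros g Hg; apply epsilon_spec, psi_in, Hg).
  split; [exact lift_spec|].
  intros g h Hg Hh. assert (Mgh : M (comp g h)) by (apply pM; auto).
  destruct (lift_spec g Hg) as [[ag _] Eg], (lift_spec h Hh) as [[ah _] Eh],
    (lift_spec _ Mgh) as [[agh _] Egh].
  extensionality v. apply (tree_aut_eq_of_agree_on_De _ _ hO agh (tree_aut_comp _ _ _ ag ah)).
  clear v. intros v Hv. set (x := exist (fun v => ~ inO v) v Hv).
  change v with (proj1_sig x). rewrite <- Egh, psi_hom by auto.
  unfold comp. rewrite Eg, Eh. reflexivity.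
Qed.

Lemma box_hom_trivial {X : Type} (M : (X -> X) -> Prop) MO ND psi :
  at_least_two Om -> perm_group M -> perm_group MO -> perm_group ND -> has_FA M ->
  ~ nontrivial_quotient_embeds M MO -> ~ nontrivial_quotient_embeds M ND ->
  (forall g, M g -> box_product adj inO col MO ND (psi g)) ->
  (forall g h, M g -> M h -> psi (comp g h) = comp (psi g) (psi h)) ->
  forall g, M g -> psi g = (fun x => x).
Proof.
  intros hO pM pMO pND FA nqO nqD psi_in psi_hom.
  destruct (box_hom_lift M MO ND psi hO pM psi_in psi_hom) as [rho [rho_spec rho_hom]].
  intros g Hg. extensionality x. destruct x as [v Hv].
  pose proof (proj2 (rho_spec g Hg) (exist _ v Hv)) as E.
  destruct (psi g _) as [w Hw]. simpl in E. apply subset_eq_compat. rewrite E.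
  apply (in_U_action_trivial M rho pM (fun g Hg => proj1 (proj1 (rho_spec g Hg))) rho_hom MO ND);
    auto.
  intros h Hh. apply rho_spec, Hh.
Qed.

End LegalColouring.

Theorem lemma7p3
  (Om1 De1 Om2 De2 : Type)
  (M1 : (Om1 -> Om1) -> Prop) (N1 : (De1 -> De1) -> Prop)
  (M2 : (Om2 -> Om2) -> Prop) (N2 : (De2 -> De2) -> Prop)
  (hO1 : at_least_two Om1) (hD1 : at_least_two De1)
  (hO2 : at_least_two Om2) (hD2 : at_least_two De2)
  (pM1 : perm_group M1) (pN1 : perm_group N1)
  (pM2 : perm_group M2) (pN2 : perm_group N2)
  (ntM1 : nontrivial M1) (ntN1 : nontrivial N1)
  (ntM2 : nontrivial M2) (ntN2 : nontrivial N2)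
  (FA1 : has_FA M1)
  (qM2 : ~ nontrivial_quotient_embeds M1 M2)
  (qN2 : ~ nontrivial_quotient_embeds M1 N2)
  (V1 : Type) (adj1 : V1 -> V1 -> Prop) (inO1 : V1 -> Prop) (col1 : V1 -> V1 -> Om1 + De1)
  (T1 : legal_box_setup adj1 inO1 col1)
  (V2 : Type) (adj2 : V2 -> V2 -> Prop) (inO2 : V2 -> Prop) (col2 : V2 -> V2 -> Om2 + De2)
  (T2 : legal_box_setup adj2 inO2 col2) :
  ~ group_iso (box_product adj1 inO1 col1 M1 N1) (box_product adj2 inO2 col2 M2 N2).
Proof.
  intros [phi [phi_in [phi_hom [phi_inj _]]]].
  destruct (exists_Om_vertex T1 hD1) as [v0 Hv0].
  set (F := relabel_box T1 v0 Hv0).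
  assert (F_in : forall s, M1 s -> box_product adj1 inO1 col1 M1 N1 (F s))
    by (intros; apply relabel_box_in; auto).
  assert (phiF_trivial : forall s, M1 s -> phi (F s) = (fun x => x)).
  { apply (box_hom_trivial T2 M1 M2 N2 (fun s => phi (F s))); auto.
    intros s t Hs Ht. unfold F. rewrite relabel_box_comp, phi_hom by (apply F_in; auto).
    reflexivity. }
  destruct ntM1 as [s [Hs Hne]]. apply Hne.
  apply (relabel_box_trivial T1 v0 Hv0).
  rewrite <- (relabel_box_id T1 v0 Hv0). fold F.
  assert (Mid : M1 (fun o => o)) by apply pM1.
  apply phi_inj; try apply F_in; auto.
  rewrite !phiF_trivial by auto. reflexivity.
Qed.
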